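(* Let $(\pi_1,\dots,\pi_R)$ be arbitrary probabilities (nonnegative, summing to 1), $N\in\mathbb N$, and $U$ uniform on $(0,1)$. Define $$N_j=\Big|\Big[N\sum_{i=1}^{j-1}\pi_i+U,\ N\sum_{i=1}^{j}\pi_i+U\Big)\cap\{1,2,\dots,N\}\Big|,\qquad j=1,\dots,R.$$ Then for any $j<k$, $\operatorname{Cov}(N_j,N_k)=F(r_l,r_m,r_u)$ for a function $F$ depending only on $r_l=N\pi_j\bmod 1$, $r_u=N\pi_k\bmod1$ and $r_m=N\sum_{i=j+1}^{k-1}\pi_i\bmod1$. Moreover, for all $r_l,r_u\in[0,1)$, $\int_0^1F(r_l,r,r_u)\,dr=0$.
   Context: $|A|$ denotes the number of elements of a finite set $A$. *)

From HB Require Import structures.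
From mathcomp Require Import all_boot all_order all_algebra.
From mathcomp Require Import all_classical all_reals all_analysis.
Set Implicit Arguments. Unset Strict Implicit. Unset Printing Implicit Defensive.
Import Order.TTheory GRing.Theory Num.Theory.
Local Open Scope classical_set_scope.
Local Open Scope ring_scope.

Definition frac1 {R : realType} (x : R) : R := x - (Num.floor x)%:~R.

Definition Ncount {R : realType} (N : nat) (pi : nat -> R) (j : nat) (u : R) : R :=
  (#|[set n : 'I_N.+1 | [&& (0 < val n)%N,
        N%:R * (\sum_(1 <= i < j) pi i) + u <= (val n)%:R &
        (val n)%:R < N%:R * (\sum_(1 <= i < j.+1) pi i) + u]]|)%:R.

(* expectation w.r.t. U uniform on (0,1) *)
Definition EU {R : realType} (f : R -> R) : R :=
  Rintegral lebesgue_measure [set x : R | 0 < x < 1] f.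

Definition CovN {R : realType} (N : nat) (pi : nat -> R) (j k : nat) : R :=
  EU (fun u => Ncount N pi j u * Ncount N pi k u)
  - EU (Ncount N pi j) * EU (Ncount N pi k).

(* Put a_j = N (pi_1 + ... + pi_(j-1)). For u in (0,1) the window count is
   N_j(u) = ceil (a_(j+1) + u) - ceil (a_j + u)
          = const + c({a_(j+1)}, u) - c({a_j}, u),
   where c(y, u) = [1 < y + u] is the carry of adding u to a fractional part y.
   Under the uniform law E c(y, U) = y and c(x, U) c(y, U) = c(min x y, U), so
   Cov (c(x, U), c(y, U)) = min x y - x y = q x + q y - q (x - y), with
   q y = y (1 - y) / 2 extended 1-periodically.  In Cov (N_j, N_k) the terms
   q x, q y cancel and four values of the periodic q at differences of the cut
   points remain; modulo 1 these are r_m, r_m + r_u, r_l + r_m + r_u and r_l + r_m.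
   Each integrates to 1/12 over a period of r_m, hence the second claim. *)

From HB Require Import structures.
From mathcomp Require Import all_boot all_order all_algebra.
From mathcomp Require Import all_classical all_reals all_analysis.
From mathcomp Require Import lra ring zify measurable_realfun.
Import Order.TTheory GRing.Theory Num.Theory.
Import numFieldNormedType.Exports.
Local Open Scope classical_set_scope.
Local Open Scope ring_scope.

Local Notation mu := (@lebesgue_measure _).

Section fractional_part.
Context {R : realType}.
Implicit Types x y : R.

Lemma frac1_itv x : 0 <= frac1 x < 1.
Proof. by have := floor_itv x; rewrite /frac1 intrD; lra. Qed.

Lemma frac1_id y : 0 <= y < 1 -> frac1 y = y.
Proof. by move=> y01; rewrite /frac1 (floor_def (m := 0)) ?subr0 //= add0r. Qed.

Lemma frac1Dz x (z : int) : frac1 (x + z%:~R) = frac1 x.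
Proof. by rewrite /frac1 floorDrz ?intr_int // intrKfloor intrD; ring. Qed.

Lemma measurable_frac1 : measurable_fun setT (@frac1 R).
Proof.
apply: measurable_funB => //; apply: nondecreasing_measurable => // x y xy.
by rewrite ler_int le_floor.
Qed.

End fractional_part.

Section periodic_parabola.
Context {R : realType}.
Implicit Types x y : R.

Definition parab y : R := y * (1 - y) / 2.

Definition per_parab x : R := parab (frac1 x).

Lemma per_parab_id y : 0 <= y <= 1 -> per_parab y = parab y.
Proof.
move=> /andP[y0 y1]; have [->|ne1] := eqVneq y 1.
  by rewrite /per_parab /frac1 floor1 subrr /parab; field.
by rewrite /per_parab frac1_id // y0 lt_neqAle ne1.
Qed.

Lemma per_parabDz x (z : int) : per_parab (x + z%:~R) = per_parab x.
Proof. by rewrite /per_parab frac1Dz. Qed.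

Lemma per_parab_frac1B x y : per_parab (frac1 x - frac1 y) = per_parab (x - y).
Proof.
have -> : frac1 x - frac1 y = x - y + (Num.floor y - Num.floor x)%:~R.
  by rewrite /frac1 intrB; ring.
exact: per_parabDz.
Qed.

Lemma per_parabN x : per_parab (- x) = per_parab x.
Proof.
have -> : - x = 1 - frac1 x + (- Num.floor x - 1)%:~R by rewrite /frac1 intrB intrN; ring.
have /andP[f0 f1] := frac1_itv x.
by rewrite per_parabDz per_parab_id /per_parab /parab; [ring | lra].
Qed.

Lemma min_parab x y : 0 <= x < 1 -> 0 <= y < 1 ->
  Num.min x y = x * y + parab x + parab y - per_parab (x - y).
Proof.
move=> /andP[x0 x1] /andP[y0 y1]; have [xy|yx] := leP x y.
  by rewrite -per_parabN opprB per_parab_id /parab; [field | lra].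
by rewrite per_parab_id /parab; [field | lra].
Qed.

Lemma per_parab_bound x : 0 <= per_parab x <= 8^-1.
Proof.
have /andP[y0 y1] := frac1_itv x; rewrite /per_parab /parab.
have := sqr_ge0 (2 * frac1 x - 1); rewrite expr2 => sq.
apply/andP; split; [apply: divr_ge0 => //; apply: mulr_ge0 | rewrite ler_pdivrMr //]; lra.
Qed.

Lemma measurable_per_parab : measurable_fun setT per_parab.
Proof.
apply: measurableT_comp measurable_frac1.
by apply: measurable_funM => //; apply: measurable_funM => //; exact: measurable_funB.
Qed.

End periodic_parabola.

Section integrable_EFin.
Context {R : realType}.
Implicit Types f g : R -> R.

Lemma integrableD_EFin (D : set R) f g : measurable D ->
  mu.-integrable D (EFin \o f) -> mu.-integrable D (EFin \o g) ->
  mu.-integrable D (EFin \o (fun x => f x + g x)).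
Proof.
move=> mD if_ ig.
have : mu.-integrable D ((EFin \o f) \+ (EFin \o g))%E by apply: integrableD.
by apply: eq_integrable => // x _ /=; rewrite EFinD.
Qed.

Lemma integrableB_EFin (D : set R) f g : measurable D ->
  mu.-integrable D (EFin \o f) -> mu.-integrable D (EFin \o g) ->
  mu.-integrable D (EFin \o (fun x => f x - g x)).
Proof.
move=> mD if_ ig.
have : mu.-integrable D ((EFin \o f) \- (EFin \o g))%E by apply: integrableB.
by apply: eq_integrable => // x _ /=; rewrite EFinB.
Qed.

Lemma integrableZl_EFin (D : set R) (k : R) f : measurable D ->
  mu.-integrable D (EFin \o f) -> mu.-integrable D (EFin \o (fun x => k * f x)).
Proof.
move=> mD if_.
have : mu.-integrable D (fun x => k%:E * (EFin \o f) x)%E by apply: integrableZl.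
by apply: eq_integrable => // x _ /=; rewrite EFinM.
Qed.

End integrable_EFin.

Section periodic_parabola_integral.
Context {R : realType}.

Definition parab_primitive (y : R) : R := y ^+ 2 / 4 - y ^+ 3 / 6.

Lemma Rintegral_parab_shift (a b c : R) : a <= b ->
  \int[mu]_(x in `[a, b]) parab (x + c) =
  parab_primitive (b + c) - parab_primitive (a + c).
Proof.
rewrite le_eqVlt => /predU1P[<-|ab]; first by rewrite set_itv1 Rintegral_set1 subrr.
pose p : {poly R} := 'X + c%:P.
pose q : {poly R} := p * (1 - p) * (2^-1)%:P.
pose Q : {poly R} := p ^+ 2 * (4^-1)%:P - p ^+ 3 * (6^-1)%:P.
have qE x : parab (x + c) = q.[x] by rewrite !hornerE.
have QE x : parab_primitive (x + c) = Q.[x] by rewrite !hornerE.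
under eq_Rintegral do rewrite qE.
rewrite !QE /Rintegral (@continuous_FTC2 _ (horner q) (horner Q) _ _ ab) //.
- by apply: continuous_in_subspaceT => x _; exact: continuous_horner.
- split; [by move=> x _; exact: derivable_horner
         | exact/cvg_at_right_filter/continuous_horner
         | exact/cvg_at_left_filter/continuous_horner].
- have dp : p^`() = 1 by rewrite derivD derivX derivC addr0.
  move=> x _; rewrite -derivE derivB !derivM !derivC dp !hornerE /=.
  by field.
Qed.

Lemma integrable_per_parab_shift (s : R) :
  mu.-integrable `[0, 1] (EFin \o (fun r => per_parab (r + s))).
Proof.
apply: measurable_bounded_integrable => //.
- exact/compact_finite_measure/segment_compact.
- apply: measurableT_comp measurable_per_parab _.
  exact: measurable_funD.
- exists 1; split => // M M1 r _; have /andP[p0 p1] := per_parab_bound (r + s).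
  by rewrite /= ger0_norm //; lra.
Qed.

Lemma Rintegral_per_parab_shift (s : R) :
  \int[mu]_(r in `[0, 1]) per_parab (r + s) = 12^-1.
Proof.
have [t /andP[t0 t1] shift] :
    exists2 t, 0 <= t < 1 & forall r, per_parab (r + s) = per_parab (r + t).
  exists (frac1 s) => [|r]; first exact: frac1_itv.
  by rewrite -(per_parabDz (r + frac1 s) (Num.floor s)) /frac1 addrA subrK.
have left_piece : \int[mu]_(r in `[0, 1 - t]) per_parab (r + s) =
    parab_primitive 1 - parab_primitive t.
  transitivity (\int[mu]_(r in `[0, 1 - t]) parab (r + t)).
    apply: eq_Rintegral => r; rewrite inE /= in_itv /= shift => /andP[r0 r1].
    by rewrite per_parab_id //; lra.
  by rewrite Rintegral_parab_shift ?subrK ?add0r //; lra.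
have right_piece : \int[mu]_(r in `[1 - t, 1]) per_parab (r + s) =
    parab_primitive t - parab_primitive 0.
  transitivity (\int[mu]_(r in `[1 - t, 1]) parab (r + (t - 1))).
    apply: eq_Rintegral => r; rewrite inE /= in_itv /= shift => /andP[r0 r1].
    rewrite -(per_parabDz _ (-1)) mulrN1z addrA per_parab_id //; lra.
  rewrite Rintegral_parab_shift; last lra.
  by congr (parab_primitive _ - parab_primitive _); ring.
have int01 := integrable_per_parab_shift s.
rewrite -[LHS](subrK (\int[mu]_(r in `[0, 1 - t]) per_parab (r + s))).
rewrite Rintegral_itvB ?bnd_simp //; [|lra|lra].
rewrite Rintegral_itv_obnd_cbnd ?left_piece ?right_piece.
  by rewrite /parab_primitive; field.
by apply: integrableS int01 => //; apply: subset_itvr; rewrite bnd_simp; lra.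
Qed.

End periodic_parabola_integral.

Section uniform_expectation.
Context {R : realType}.
Local Notation U01 := ([set x : R | 0 < x < 1]).
Implicit Types (x y u : R) (f g : R -> R).

Lemma measurable_U01 : measurable U01.
Proof.
by rewrite (_ : U01 = `]0, 1[%classic) //; apply: eq_set => x; rewrite in_itv.
Qed.

Lemma lebesgue_measure_U01 : mu U01 = 1%:E.
Proof.
have := @lebesgue_measure_itv R `]0, 1[; rewrite /= lte_fin ltr01 oppr0 adde0 => <-.
by congr (mu _); apply: eq_set => x; rewrite in_itv.
Qed.

Definition carry y u : R := ((1 < y + u)%R)%:R.

Lemma carry_min x y u : carry (Num.min x y) u = carry x u * carry y u.
Proof.
rewrite /carry; have [xy|yx] := leP x y.
  have [xu|_] := ltP 1 (x + u); last by rewrite mul0r.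
  by rewrite (_ : 1 < y + u) ?mulr1 //; lra.
have [yu|_] := ltP 1 (y + u); last by rewrite mulr0.
by rewrite (_ : 1 < x + u) ?mul1r //; lra.
Qed.

Lemma carry_indic y : {in U01, carry y =1 \1_`]1 - y, 1[}.
Proof.
move=> u; rewrite inE /= => /andP[u0 u1].
by rewrite indicE /carry mem_setE in_itv /= u1 andbT ltrBlDl.
Qed.

Lemma integrable_carry y : mu.-integrable U01 (EFin \o carry y).
Proof.
have : mu.-integrable U01 (EFin \o \1_`]1 - y, 1[).
  apply: (integrableS measurableT) => //; first exact: measurable_U01.
  exact: integrable_indic_itv.
apply: eq_integrable; first exact: measurable_U01.
by move=> u uU /=; rewrite carry_indic.
Qed.

Lemma EU_carry y : 0 <= y <= 1 -> EU (carry y) = y.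
Proof.
move=> /andP[y0 y1]; rewrite /EU.
transitivity (\int[mu]_(u in U01) (\1_`]1 - y, 1[ u : R)).
  by apply: eq_Rintegral => u uU; exact: carry_indic.
rewrite /Rintegral integral_indic //; last exact: measurable_U01.
rewrite (_ : _ `&` _ = `]1 - y, 1[%classic); last first.
  by apply/seteqP; split => u /=; rewrite !in_itv /=; [case=> /andP[]|split]; lra.
have := @lebesgue_measure_itv R `]1 - y, 1[; rewrite /= => ->.
rewrite lte_fin; case: ltP => /= ?; first by ring.
by lra.
Qed.

Lemma integrable_cst_U01 (c : R) : mu.-integrable U01 (EFin \o cst c).
Proof.
apply: measurable_bounded_integrable; first exact: measurable_U01.
- by rewrite (_ : _ U01 = 1%:E) ?ltry //; exact: lebesgue_measure_U01.
- by [].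
- exact: bounded_cst.
Qed.

Lemma EU_cst (c : R) : EU (cst c) = c.
Proof.
rewrite /EU Rintegral_cst; last exact: measurable_U01.
by rewrite (_ : _ U01 = 1%:E) ?mulr1 //; exact: lebesgue_measure_U01.
Qed.

Definition stepfun (c : R) (s : seq (R * R)) u : R :=
  c + \sum_(p <- s) p.1 * carry p.2 u.

Lemma stepfun_nil c : stepfun c [::] = cst c.
Proof. by apply/funext => u; rewrite /stepfun big_nil addr0. Qed.

Lemma stepfun_cons c p s :
  stepfun c (p :: s) = fun u => p.1 * carry p.2 u + stepfun c s u.
Proof. by apply/funext => u; rewrite /stepfun big_cons addrCA. Qed.

Lemma integrable_stepfun c s : mu.-integrable U01 (EFin \o stepfun c s).
Proof.
elim: s => [|p s IH]; first by rewrite stepfun_nil; exact: integrable_cst_U01.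
rewrite stepfun_cons; apply: integrableD_EFin => //; first exact: measurable_U01.
by apply: integrableZl_EFin; [exact: measurable_U01 | exact: integrable_carry].
Qed.

Lemma EU_stepfun c s : all (fun p => 0 <= p.2 <= 1) s ->
  EU (stepfun c s) = c + \sum_(p <- s) p.1 * p.2.
Proof.
elim: s => [_|p s IH /= /andP[p01 s01]].
  by rewrite stepfun_nil EU_cst big_nil addr0.
rewrite stepfun_cons /EU RintegralD; first last.
- exact: integrable_stepfun.
- by apply: integrableZl_EFin; [exact: measurable_U01 | exact: integrable_carry].
- exact: measurable_U01.
rewrite RintegralZl; [|exact: measurable_U01|exact: integrable_carry].
by rewrite -!/(EU _) EU_carry // IH // big_cons addrCA.
Qed.

Definition covU f g : R := EU (fun u => f u * g u) - EU f * EU g.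

Lemma eq_covU {f f' g g' : R -> R} : {in U01, f =1 f'} -> {in U01, g =1 g'} ->
  covU f g = covU f' g'.
Proof.
move=> ff' gg'; rewrite /covU /EU.
by congr (_ - _ * _); apply: eq_Rintegral => u uU; rewrite ?ff' ?gg'.
Qed.

Lemma covU_carry (c1 c2 x1 x2 y1 y2 : R) :
  0 <= x1 < 1 -> 0 <= x2 < 1 -> 0 <= y1 < 1 -> 0 <= y2 < 1 ->
  covU (fun u => c1 + carry x1 u - carry x2 u) (fun u => c2 + carry y1 u - carry y2 u) =
  per_parab (x2 - y1) + per_parab (x1 - y2) - per_parab (x1 - y1) - per_parab (x2 - y2).
Proof.
move=> x1_01 x2_01 y1_01 y2_01.
have fE c x y : (fun u => c + carry x u - carry y u) = stepfun c [:: (1, x); (-1, y)].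
  by apply/funext => u; rewrite /stepfun !big_cons big_nil /=; ring.
have fgE : (fun u => (c1 + carry x1 u - carry x2 u) * (c2 + carry y1 u - carry y2 u)) =
    stepfun (c1 * c2) [:: (c1, y1); (- c1, y2); (c2, x1); (- c2, x2);
      (1, Num.min x1 y1); (-1, Num.min x1 y2); (-1, Num.min x2 y1); (1, Num.min x2 y2)].
  by apply/funext => u; rewrite /stepfun !big_cons big_nil /= !carry_min; ring.
have min01 x y : 0 <= x < 1 -> 0 <= y < 1 -> 0 <= Num.min x y <= 1.
  by move=> /andP[? ?] /andP[? ?]; case: (leP x y) => _; apply/andP; split; lra.
have le01 x : 0 <= x < 1 -> 0 <= x <= 1 by move=> /andP[-> /ltW].
rewrite /covU fgE !fE !EU_stepfun /= ?min01 ?le01 // !big_cons !big_nil /=.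
by rewrite !min_parab //; ring.
Qed.

End uniform_expectation.

Lemma card_ord_range (M p q : nat) : (q <= M)%N ->
  #|[set n : 'I_M | (p <= n < q)%N]| = (q - p)%N.
Proof.
move=> qM; rewrite -sum1_card -[(q - p)%N]muln1 -sum_nat_const_nat.
rewrite (big_nat_widen _ _ _ _ _ qM) big_geq_mkord.
by apply: eq_bigl => n; rewrite unfold_in /= asboolb andbC.
Qed.

Section counting.
Context {R : realType}.

Lemma card_window (M : nat) (A B : R) : 0 < A <= B -> B <= M%:R + 1 ->
  (#|[set n : 'I_M.+1 | [&& (0 < val n)%N, A <= (val n)%:R & (val n)%:R < B]]|)%:R =
  ((Num.ceil B - Num.ceil A)%:~R : R).
Proof.
move=> /andP[A0 AB] BM.
have [p pE] : exists p : nat, Num.ceil A = p.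
  by exists `|Num.ceil A|%N; rewrite gez0_abs // ltW // ceil_gt0.
have [q qE] : exists q : nat, Num.ceil B = q.
  by exists `|Num.ceil B|%N; rewrite gez0_abs // (le_trans _ (le_ceil AB)) // pE.
have p0 : (0 < p)%N by rewrite -ltz_nat -pE ceil_gt0.
have qM : (q <= M.+1)%N by rewrite -lez_nat -qE ceil_le_int -pmulrn mulrSr.
rewrite (_ : [set n | _] = [set n : 'I_M.+1 | (p <= n < q)%N]); last first.
  apply: eq_set => n; rewrite !pmulrn -ceil_le_int -ceil_gt_int pE qE lez_nat ltz_nat.
  rewrite -[val n]/(nat_of_ord n).
  by case: (leqP p n) => //= pn; rewrite ?andbF // (leq_trans p0 pn).
rewrite card_ord_range // pE qE subzn -?pmulrn //.
by rewrite -lez_nat -pE -qE le_ceil.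
Qed.

Lemma ceilD_carry (x u : R) : 0 < u < 1 ->
  (Num.ceil (x + u))%:~R = (Num.floor x)%:~R + 1 + carry (frac1 x) u.
Proof.
move=> /andP[u0 u1]; have /andP[f0 f1] := frac1_itv x.
have xE : x = frac1 x + (Num.floor x)%:~R by rewrite /frac1 subrK.
rewrite /carry; case: ltP => c.
  rewrite (@ceil_def _ _ (Num.floor x + 2)); first by rewrite intrD /=; ring.
  by rewrite !intrD; apply/andP; split; lra.
rewrite (@ceil_def _ _ (Num.floor x + 1)); first by rewrite intrD /=; ring.
by rewrite !intrD; apply/andP; split; lra.
Qed.

Lemma card_shift_window (N : nat) (x y u : R) : 0 <= x <= y -> y <= N%:R -> 0 < u < 1 ->
  (#|[set n : 'I_N.+1 |
      [&& (0 < val n)%N, x + u <= (val n)%:R & (val n)%:R < y + u]]|)%:R =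
  (Num.floor y - Num.floor x)%:~R + carry (frac1 y) u - carry (frac1 x) u.
Proof.
move=> /andP[x0 xy] yN /[dup] u01 /andP[u0 u1].
rewrite card_window ?intrB ?ceilD_carry //; first ring.
  by apply/andP; split; lra.
by lra.
Qed.

End counting.

Section prefix_sums.
Context {R : realType} (Rn : nat) (pi : nat -> R).
Hypothesis pi_ge0 : forall i, (1 <= i <= Rn)%N -> 0 <= pi i.
Hypothesis pi_sum1 : \sum_(1 <= i < Rn.+1) pi i = 1.

Lemma prefix_sum_bounds (m n : nat) : (m <= n <= Rn.+1)%N ->
  [/\ 0 <= \sum_(1 <= i < m) pi i, \sum_(1 <= i < m) pi i <= \sum_(1 <= i < n) pi i
    & \sum_(1 <= i < n) pi i <= 1].
Proof.
have seg_ge0 p q : (1 <= p)%N -> (q <= Rn.+1)%N -> 0 <= \sum_(p <= i < q) pi i.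
  move=> p1 qR; rewrite big_nat_cond; apply: sumr_ge0 => i /andP[/andP[pi' iq] _].
  by apply: pi_ge0; lia.
have mono p q : (p <= q <= Rn.+1)%N -> \sum_(1 <= i < p) pi i <= \sum_(1 <= i < q) pi i.
  case: p => [|p] /andP[pq qR]; first by rewrite big_geq // seg_ge0.
  by rewrite (@big_cat_nat _ _ _ p.+1 1 q) //= lerDl seg_ge0.
move=> /andP[mn nR]; split; first by rewrite seg_ge0 //; lia.
  by apply: mono; rewrite mn nR.
by rewrite -pi_sum1; apply: mono; rewrite nR /=.
Qed.

End prefix_sums.

Section window_counts.
Context {R : realType} (N : nat) (pi : nat -> R).
Local Notation cut j := (N%:R * \sum_(1 <= i < j) pi i).

Lemma Ncount_carry (j : nat) :
  0 <= \sum_(1 <= i < j) pi i -> \sum_(1 <= i < j) pi i <= \sum_(1 <= i < j.+1) pi i ->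
  \sum_(1 <= i < j.+1) pi i <= 1 ->
  {in [set u : R | 0 < u < 1], Ncount N pi j =1 fun u =>
    (Num.floor (cut j.+1) - Num.floor (cut j))%:~R
    + carry (frac1 (cut j.+1)) u - carry (frac1 (cut j)) u}.
Proof.
move=> S0 SS S1 u /set_mem u01; rewrite /Ncount card_shift_window //.
  by apply/andP; split; [exact: mulr_ge0 | exact: ler_wpM2l].
by rewrite -[leRHS]mulr1 ler_wpM2l.
Qed.

End window_counts.

Section covariance_function.
Context {R : realType}.
Implicit Types l m u : R.

Definition Fcov l m u : R :=
  per_parab (m + (l + u)) + per_parab m - per_parab (m + u) - per_parab (m + l).

Lemma Fcov_cuts (a l m u : R) :
  per_parab (a - (a + l + m + u)) + per_parab (a + l - (a + l + m))
  - per_parab (a + l - (a + l + m + u)) - per_parab (a - (a + l + m)) = Fcov l m u.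
Proof.
rewrite /Fcov -(per_parabN (m + (l + u))) -(per_parabN m) -(per_parabN (m + u)).
rewrite -(per_parabN (m + l)).
by congr (per_parab _ + per_parab _ - per_parab _ - per_parab _); ring.
Qed.

Lemma Fcov_frac1 l m u : Fcov (frac1 l) (frac1 m) (frac1 u) = Fcov l m u.
Proof.
have modz (x y : R) (z : int) : x = y + z%:~R -> per_parab x = per_parab y.
  by move=> ->; exact: per_parabDz.
rewrite /Fcov.
rewrite (modz (frac1 m + (frac1 l + frac1 u)) (m + (l + u))
  (- Num.floor m - Num.floor l - Num.floor u)); last by rewrite /frac1 !intrB intrN; ring.
rewrite (modz (frac1 m) m (- Num.floor m)); last by rewrite /frac1 intrN; ring.
rewrite (modz (frac1 m + frac1 u) (m + u) (- Num.floor m - Num.floor u)); last first.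
  by rewrite /frac1 intrB intrN; ring.
rewrite (modz (frac1 m + frac1 l) (m + l) (- Num.floor m - Num.floor l)) //.
by rewrite /frac1 intrB intrN; ring.
Qed.

Lemma integral_Fcov l u :
  mu.-integrable [set r : R | 0 <= r <= 1] (fun r => (Fcov l r u)%:E) /\
  (\int[mu]_(r in [set r : R | (0 <= r <= 1)%R]) (Fcov l r u)%:E = 0)%E.
Proof.
have -> : [set r : R | 0 <= r <= 1] = `[0, 1]%classic.
  by apply: eq_set => r; rewrite in_itv.
have FcovE : (fun r => Fcov l r u) = fun r =>
    per_parab (r + (l + u)) + per_parab (r + 0) - per_parab (r + u) - per_parab (r + l).
  by apply/funext => r; rewrite /Fcov addr0.
have ip := @integrable_per_parab_shift R.
have iF : mu.-integrable `[0, 1] (EFin \o fun r => Fcov l r u).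
  by rewrite FcovE; do 2 apply: integrableB_EFin => //; exact: integrableD_EFin.
split => //; rewrite -(fineK (integrable_fin_num _ iF)) //; congr EFin.
rewrite -[fine _]/(Rintegral mu `[0, 1] (fun r => Fcov l r u)) FcovE.
rewrite RintegralB //; last by apply: integrableB_EFin => //; exact: integrableD_EFin.
rewrite RintegralB //; last exact: integrableD_EFin.
by rewrite RintegralD // !Rintegral_per_parab_shift; ring.
Qed.

End covariance_function.

Theorem lemma2 (R : realType) :
  exists F : R -> R -> R -> R,
    (forall (Rn N : nat) (pi : nat -> R) (j k : nat),
        (forall i, (1 <= i <= Rn)%N -> 0 <= pi i) ->
        \sum_(1 <= i < Rn.+1) pi i = 1 ->
        (0 < N)%N ->
        (1 <= j)%N -> (j < k)%N -> (k <= Rn)%N ->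
        CovN N pi j k =
          F (frac1 (N%:R * pi j))
            (frac1 (N%:R * \sum_(j.+1 <= i < k) pi i))
            (frac1 (N%:R * pi k))) /\
    (forall rl ru : R, 0 <= rl < 1 -> 0 <= ru < 1 ->
        (@lebesgue_measure R).-integrable [set r : R | 0 <= r <= 1]
          (fun r => (F rl r ru)%:E) /\
        (\int[@lebesgue_measure R]_(r in [set r : R | (0 <= r <= 1)%R]) (F rl r ru)%:E
          = 0)%E).
Proof.
exists Fcov; split=> [Rn N pi j k pi_ge0 pi_sum1 _ j1 jk kRn|rl ru _ _]; last first.
  exact: integral_Fcov.
have [Sj0 Sjj1 Sj11] := @prefix_sum_bounds _ _ _ pi_ge0 pi_sum1 j j.+1 ltac:(lia).
have [Sk0 Skk1 Sk11] := @prefix_sum_bounds _ _ _ pi_ge0 pi_sum1 k k.+1 ltac:(lia).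
have -> : CovN N pi j k = covU (Ncount N pi j) (Ncount N pi k) by [].
rewrite (eq_covU (Ncount_carry _ _ _ Sj0 Sjj1 Sj11) (Ncount_carry _ _ _ Sk0 Skk1 Sk11)).
rewrite covU_carry ?frac1_itv // !per_parab_frac1B.
have Sj1E : \sum_(1 <= i < j.+1) pi i = \sum_(1 <= i < j) pi i + pi j.
  exact: big_nat_recr.
have SkE : \sum_(1 <= i < k) pi i =
    \sum_(1 <= i < j.+1) pi i + \sum_(j.+1 <= i < k) pi i by apply: big_cat_nat.
have Sk1E : \sum_(1 <= i < k.+1) pi i = \sum_(1 <= i < k) pi i + pi k.
  by apply: big_nat_recr; lia.
by rewrite Sk1E SkE Sj1E !mulrDr Fcov_cuts Fcov_frac1.
Qed.
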